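(* Let $\mathcal{H}$ be an effective ample second countable Hausdorff groupoid with $\mathcal{H}^{(0)}$ a locally compact Cantor space. Then $\mathcal{H}$ embeds into $\mathcal{G}_{E_2}$ if and only if $\mathcal{H}\times\mathcal{R}$ embeds into $\mathcal{G}_{E_2}$.
   Context: ''Embeds'' means there is an injective étale homomorphism (groupoid homomorphism that is a local homeomorphism). Ample: étale with unit space Hausdorff with a basis of compact open sets; effective: interior of the isotropy $\{g:s(g)=r(g)\}$ equals the unit space. A locally compact Cantor space is a non-empty second countable Hausdorff space with a basis of compact open sets and no isolated points. $\mathcal{R}=\mathbb{N}\times\mathbb{N}$ with the discrete topology, $(k,m)(m,n)=(k,n)$, $(m,n)^{-1}=(n,m)$; $\mathcal{H}\times\mathcal{R}$ is the product groupoid. $E_2$ is the graph with one vertex $v$ and two loops $a,b$; $E_2^\infty$ is the space of infinite words in $\{a,b\}$ with the cylinder topology, $\sigma$ the shift, and $\mathcal{G}_{E_2}=\{(x,m-n,y):x,y\in E_2^\infty, m,n\ge0,\sigma^m(x)=\sigma^n(y)\}$ with $(x,k,y)(y,l,z)=(x,k+l,z)$, $(x,k,y)^{-1}=(y,-k,x)$, topology generated by $\{(x,m-n,y):x\in U,y\in V,\sigma^m(x)=\sigma^n(y)\}$ for open $U,V$ on which $\sigma^m,\sigma^n$ are injective with $\sigma^m(U)=\sigma^n(V)$. *)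

From HB Require Import structures.
From mathcomp Require Import all_boot all_order all_algebra.
From mathcomp Require Import all_classical all_reals all_analysis.
From mathcomp Require Import zify ring lra.

Set Implicit Arguments.
Unset Strict Implicit.
Unset Printing Implicit Defensive.

Import Order.TTheory GRing.Theory Num.Theory.
Local Open Scope classical_set_scope.
Local Open Scope ring_scope.

(* is a total function whose values only matter on composable pairs.   *)

Record gpd_ops (G : Type) := GpdOps {
  gsrc : G -> G ;
  grng : G -> G ;
  gmul : G -> G -> G ;
  ginv : G -> G }.

Section Groupoid.
Context {G : Type} (o : gpd_ops G).

Definition units : set G := [set g | gsrc o g = g].

Definition composable (g h : G) : Prop := gsrc o g = grng o h.

Definition is_groupoid : Prop :=
  [/\ (forall g, gsrc o (gsrc o g) = gsrc o g /\ grng o (gsrc o g) = gsrc o g),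
      (forall g, gsrc o (grng o g) = grng o g /\ grng o (grng o g) = grng o g),
      (forall g h, composable g h ->
         gsrc o (gmul o g h) = gsrc o h /\ grng o (gmul o g h) = grng o g),
      (forall g h k, composable g h -> composable h k ->
         gmul o (gmul o g h) k = gmul o g (gmul o h k)) &
    (forall g, gmul o (grng o g) g = g /\ gmul o g (gsrc o g) = g) /\
      (forall g, [/\ gsrc o (ginv o g) = grng o g, grng o (ginv o g) = gsrc o g,
                    gmul o g (ginv o g) = grng o g &
                    gmul o (ginv o g) g = gsrc o g])].

Definition isotropy : set G := [set g | gsrc o g = grng o g].

End Groupoid.

Section Topo.
Context {T : topologicalType}.

Definition open_in (A B : set T) : Prop :=
  exists2 O, open O & B = O `&` A.

Definition rel_hausdorff (A : set T) : Prop :=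
  forall x y, A x -> A y -> x <> y ->
    exists U V, [/\ open_in A U, open_in A V, U x, V y & U `&` V = set0].

Definition rel_second_countable (A : set T) : Prop :=
  exists B : set (set T), [/\ countable B, (forall U, B U -> open_in A U) &
    forall x W, A x -> open_in A W -> W x -> exists2 U, B U & U x /\ U `<=` W].

Definition rel_compact_open_basis (A : set T) : Prop :=
  forall x W, A x -> open_in A W -> W x ->
    exists K, [/\ open_in A K, compact K, K x & K `<=` W].

Definition rel_no_isolated_points (A : set T) : Prop :=
  forall x W, A x -> open_in A W -> W x -> exists2 y, W y & y <> x.

Definition locally_compact_cantor (A : set T) : Prop :=
  [/\ A !=set0, rel_second_countable A, rel_hausdorff A,
      rel_compact_open_basis A & rel_no_isolated_points A].

End Topo.

Definition local_homeo {T U : topologicalType} (f : T -> U) : Prop :=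
  continuous f /\
  forall x, exists U0 : set T, [/\ open U0, U0 x,
    (forall a b, U0 a -> U0 b -> f a = f b -> a = b) &
    (forall V, open V -> V `<=` U0 -> open (f @` V))].

Section TopGroupoid.
Context {G : topologicalType} (o : gpd_ops G).

Definition topological_groupoid : Prop :=
  [/\ is_groupoid o,
      {within [set p : G * G | composable o p.1 p.2],
         continuous (fun p : G * G => gmul o p.1 p.2)},
      continuous (ginv o), continuous (gsrc o) & continuous (grng o)].

Definition etale : Prop := topological_groupoid /\ local_homeo (grng o).

Definition ample : Prop :=
  [/\ etale, rel_hausdorff (units o) & rel_compact_open_basis (units o)].

Definition effective : Prop := interior (isotropy o) = units o.

End TopGroupoid.

Definition gpd_hom {H G : Type} (oH : gpd_ops H) (oG : gpd_ops G)
  (f : H -> G) : Prop :=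
  forall g h, composable oH g h ->
    composable oG (f g) (f h) /\ f (gmul oH g h) = gmul oG (f g) (f h).

Definition embeds {H G : topologicalType} (oH : gpd_ops H) (oG : gpd_ops G)
  : Prop :=
  exists f : H -> G, [/\ injective f, gpd_hom oH oG f & local_homeo f].

(* The product H x R with R = N x N (discrete pair groupoid)            *)

Definition prodR_ops {H : Type} (o : gpd_ops H) : gpd_ops (H * (nat * nat)) :=
  @GpdOps (H * (nat * nat))
    (fun g => (gsrc o g.1, (g.2.2, g.2.2)))
    (fun g => (grng o g.1, (g.2.1, g.2.1)))
    (fun g h => (gmul o g.1 h.1, (g.2.1, h.2.2)))
    (fun g => (ginv o g.1, (g.2.2, g.2.1))).

(* E_2^oo = infinite words in {a,b} = nat -> bool with the product
   (cylinder) topology *)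
Definition E2inf := cantor_space.

Definition shift (x : E2inf) : E2inf := fun i => x i.+1.

Definition E2rel (x : E2inf) (k : int) (y : E2inf) : Prop :=
  exists m n : nat, k = m%:Z - n%:Z /\ iter m shift x = iter n shift y.

Record GE2 := MkGE2 {
  ge_x : E2inf ; ge_k : int ; ge_y : E2inf ; ge_prop : E2rel ge_x ge_k ge_y }.

HB.instance Definition _ := gen_eqMixin GE2.
HB.instance Definition _ := gen_choiceMixin GE2.

Lemma E2rel_refl x : E2rel x 0 x.
Proof. by exists 0%N, 0%N. Qed.

Lemma E2rel_sym x k y : E2rel x k y -> E2rel y (- k) x.
Proof. by case=> m [n [-> e]]; exists n, m; split; [rewrite opprB|]. Qed.

Lemma iter_shiftD m n x : iter (m + n) shift x = iter m shift (iter n shift x).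
Proof. by rewrite iterD. Qed.

Lemma E2rel_trans x k y l z : E2rel x k y -> E2rel y l z -> E2rel x (k + l) z.
Proof.
case=> m [n [-> e1]] [p [q [-> e2]]]; exists (p + m)%N, (n + q)%N; split.
  by rewrite !PoszD; lia.
by rewrite iterD e1 -iterD addnC iterD e2 -iterD.
Qed.

Definition ge_src (g : GE2) : GE2 := MkGE2 (E2rel_refl (ge_y g)).
Definition ge_rng (g : GE2) : GE2 := MkGE2 (E2rel_refl (ge_x g)).
Definition ge_inv (g : GE2) : GE2 := MkGE2 (E2rel_sym (ge_prop g)).
Definition ge_mul (g h : GE2) : GE2 :=
  match pselect (ge_y g = ge_x h) with
  | left e =>
      MkGE2 (E2rel_trans (ge_prop g)
               (eq_rect_r (fun u => E2rel u (ge_k h) (ge_y h)) (ge_prop h) e))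
  | right _ => g
  end.

Definition GE2_ops : gpd_ops GE2 := GpdOps ge_src ge_rng ge_mul ge_inv.

Definition ge_index := (nat * nat * set E2inf * set E2inf)%type.

Definition ge_basic_ok (i : ge_index) : Prop :=
  let: (m, n, U, V) := i in
  [/\ open U, open V,
      (forall a b, U a -> U b -> iter m shift a = iter m shift b -> a = b),
      (forall a b, V a -> V b -> iter n shift a = iter n shift b -> a = b) &
      iter m shift @` U = iter n shift @` V].

Definition ge_basic (i : ge_index) : set GE2 :=
  let: (m, n, U, V) := i in
  [set g | [/\ U (ge_x g), V (ge_y g), ge_k g = m%:Z - n%:Z &
               iter m shift (ge_x g) = iter n shift (ge_y g)]].

HB.instance Definition _ :=
  @isSubBaseTopological.Build GE2 ge_index ge_basic_ok ge_basic.

(* Prepending a^m b to range words and a^n b to source words sends (x, k, y)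
   to (a^m b x, k + m - n, a^n b y).  For fixed (m, n) this is a homeomorphism
   of G_{E_2} onto an open subset, because the (m + 1)-fold shift maps the
   clopen cylinder of a^m b homeomorphically onto E_2^oo; letting (m, n) range
   over N x N gives an injective etale homomorphism G_{E_2} x R -> G_{E_2}.
   So an embedding f of H yields the embedding (h, (m, n)) |-> phi_{m,n} (f h)
   of H x R, while H always embeds into H x R as H x {(0, 0)}. *)

From Pilot Require Import Defs.
From HB Require Import structures.
From mathcomp Require Import all_boot all_order all_algebra.
From mathcomp Require Import all_classical all_reals all_analysis.
From mathcomp Require Import finmap zify.
Set Implicit Arguments.
Unset Strict Implicit.
Unset Printing Implicit Defensive.
Local Open Scope classical_set_scope.

Lemma open_bigcap_fset {T : topologicalType} {I : choiceType} (F : {fset I})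
    (f : I -> set T) :
  (forall i, i \in F -> open (f i)) -> open (\bigcap_(i in [set` F]) f i).
Proof.
move=> fF; rewrite openE => x Fx; apply: filter_bigI => i iF.
by apply: open_nbhs_nbhs; split; [exact: fF | exact: Fx].
Qed.

Section LocalHomeomorphisms.
Context {X Y Z : topologicalType}.

Lemma open_map_local_homeo (f : X -> Y) : continuous f -> injective f ->
  (forall V, open V -> open (f @` V)) -> local_homeo f.
Proof.
move=> fc finj fo; split=> // x; exists setT.
by split=> [||a b _ _ /finj|V oV _]; [exact: openT| | |exact: fo].
Qed.

Lemma local_homeo_comp (f : X -> Y) (g : Y -> Z) :
  local_homeo f -> local_homeo g -> local_homeo (g \o f).
Proof.
move=> [fc fl] [gc gl]; split=> [x|x].
  by apply: continuous_comp; [exact: fc | exact: gc].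
have [U [oU Ux Uinj Uopen]] := fl x; have [W [oW Wfx Winj Wopen]] := gl (f x).
exists (U `&` f @^-1` W); split=> [||a b [Ua Wa] [Ub Wb] /Winj|V oV VUW].
- by apply: openI oU _; exact: open_comp.
- by [].
- by move=> /(_ Wa Wb); exact: Uinj.
rewrite -image_comp; apply: Wopen; first by apply: Uopen => // v /VUW [].
by move=> _ [v /VUW [_ ?] <-].
Qed.

End LocalHomeomorphisms.

Section DiscreteFactor.
Context {X Y D : topologicalType}.
Hypothesis D_discrete : forall d : D, nbhs d [set d].

Lemma pair_const_continuous (d : D) : continuous (fun x : X => (x, d)).
Proof.
move=> x A [[P Q] [/= xP dQ] PQA].
by apply: filterS xP => z Pz; apply: PQA; split=> //; exact: nbhs_singleton dQ.
Qed.

Lemma open_setX1 (V : set X) (d : D) : open V -> open (V `*` [set d]).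
Proof.
rewrite !openE => oV [x _] [/= Vx ->]; exists (V, [set d]) => //.
by split; [exact: oV | exact: D_discrete].
Qed.

Lemma local_homeo_pair_const (d : D) : local_homeo (fun x : X => (x, d)).
Proof.
apply: open_map_local_homeo; first exact: pair_const_continuous.
  by move=> a b [].
move=> V oV; suff -> : (fun x => (x, d)) @` V = V `*` [set d] by exact: open_setX1.
by apply/seteqP; split=> [_ [x Vx <-] //|[x _] [/= Vx ->]]; exists x.
Qed.

Lemma local_homeo_slices (F : X * D -> Y) :
  (forall d, local_homeo (fun x => F (x, d))) -> local_homeo F.
Proof.
move=> Fl; split=> [[x d] A FA|[x d]].
  have Fx : nbhs x ((fun z => F (z, d)) @^-1` A) by exact: (proj1 (Fl d) x).
  exists ((fun z => F (z, d)) @^-1` A, [set d]); first by split=> //; exact: D_discrete.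
  by move=> [z e] [/= Az ->].
have [U [oU Ux Uinj Uopen]] := proj2 (Fl d) x.
exists (U `*` [set d]); split=> [||[a e] [b e'] [/= Ua ->] [/= Ub ->] /Uinj-> //|V oV VU].
- exact: open_setX1.
- by [].
have -> : F @` V = (fun z => F (z, d)) @` [set z | V (z, d)].
  apply/seteqP; split=> [_ [[z e] Vz <-]|_ [z Vz <-]]; last by exists (z, d).
  by have [_ /= ed] := VU _ Vz; subst e; exists z.
apply: Uopen; last by move=> z /VU [].
by move: oV; apply: open_comp => z _; exact: pair_const_continuous.
Qed.

End DiscreteFactor.

Lemma nat2_discrete (mn : nat * nat) : nbhs mn [set mn].
Proof.
case: mn => m n; exists ([set m], [set n]); first by split; exact: discrete_set1.
by move=> [a b] [/= -> ->].
Qed.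

Section Embeddings.
Context {H K G : topologicalType} (oH : gpd_ops H) (oK : gpd_ops K) (oG : gpd_ops G).

Lemma embeds_trans : embeds oH oK -> embeds oK oG -> embeds oH oG.
Proof.
move=> [f [finj fhom floc]] [g [ginj ghom gloc]]; exists (g \o f); split.
- exact: inj_comp.
- by move=> a b /fhom [/ghom [cab gab] fab]; split; rewrite //= fab.
- exact: local_homeo_comp.
Qed.

Lemma embeds_prodR : embeds oH oG -> embeds (prodR_ops oH) (prodR_ops oG).
Proof.
move=> [f [finj fhom floc]]; exists (fun z => (f z.1, z.2)); split.
- by move=> [a mn] [b mn'] [/finj -> ->].
- move=> [a [m n]] [b [m' n']] [/fhom [cab fab] ->].
  by split; [rewrite /composable /= cab | rewrite /= fab].
- apply: (local_homeo_slices nat2_discrete) => mn.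
  exact: local_homeo_comp floc (local_homeo_pair_const nat2_discrete mn).
Qed.

End Embeddings.

Lemma embeds_prodR_corner {H : topologicalType} (o : gpd_ops H) :
  embeds o (prodR_ops o).
Proof.
exists (fun h => (h, (0, 0)%N)); split.
- by move=> a b [].
- by move=> a b cab; split=> //; rewrite /composable /= cab.
- exact: local_homeo_pair_const nat2_discrete _.
Qed.

Local Notation sh p := (iter p Defs.shift).

Lemma iter_shiftE p (x : E2inf) : sh p x = fun i => x (i + p)%N.
Proof.
elim: p => [|p IH] /=; first by apply: funext => i; rewrite addn0.
by rewrite IH; apply: funext => i; rewrite /Defs.shift addSnnS.
Qed.

Lemma iter_shift_eqP p q (x y : E2inf) :
  sh p x = sh q y <-> forall i, x (i + p)%N = y (i + q)%N.
Proof.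
rewrite !iter_shiftE; split=> [e i|e]; last exact: funext.
exact: (congr1 (fun f => f i) e).
Qed.

Definition cyl (x : E2inf) (L : nat) : set E2inf :=
  [set z | forall i, (i < L)%N -> z i = x i].

Lemma subset_cyl x L L' : (L <= L')%N -> cyl x L' `<=` cyl x L.
Proof. by move=> LL' z zx i iL; apply: zx; exact: leq_trans LL'. Qed.

Lemma cyl_nbhs x L : nbhs x (cyl x L).
Proof.
elim: L => [|L IH]; first by apply: filterS filterT => z _ i.
have oL : open (proj L @^-1` [set x L] : set E2inf).
  by apply: open_comp; [move=> + _; exact: proj_continuous | exact: discrete_open].
apply: filterS (filterI IH (open_nbhs_nbhs (conj oL erefl))) => z [zx zL] i.
by rewrite ltnS leq_eqVlt => /predU1P[->|]; [exact: zL | exact: zx].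
Qed.

Lemma cyl_open x L : open (cyl x L).
Proof.
rewrite openE => z zx; suff <- : cyl z L = cyl x L by exact: cyl_nbhs.
by apply/seteqP; split=> w wc i iL; rewrite wc // zx.
Qed.

Lemma nbhs_cylP x (U : set E2inf) : nbhs x U <-> exists L, cyl x L `<=` U.
Proof.
split=> [xU|[L LU]]; last exact: filterS LU (cyl_nbhs x L).
pose F := filter_from [set: nat] (cyl x).
have FF : Filter F.
  apply: filter_from_filter; first by exists 0%N.
  move=> i j _ _; exists (maxn i j) => // z zx.
  by split; apply: subset_cyl zx; [exact: leq_maxl | exact: leq_maxr].
have Fx : F --> x.
  apply/pointwise_cvgP => t A At; exists t.+1 => // z zx.
  by rewrite /= (zx t (ltnSn t)); exact: nbhs_singleton.
by have [L _ LU] := Fx U xU; exists L.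
Qed.

Lemma shift_continuous : continuous Defs.shift.
Proof.
move=> x U /nbhs_cylP [L LU]; apply/nbhs_cylP; exists L.+1 => z zx.
by apply: LU => i iL; apply: zx.
Qed.

Lemma iter_shift_continuous p : continuous (sh p).
Proof.
elim: p => [|p IH] x; first exact: cvg_id.
exact: (continuous_comp (@IH x) (@shift_continuous _)).
Qed.

Lemma iter_shift_cyl p x L : sh p @` cyl x (p + L) = cyl (sh p x) L.
Proof.
apply/seteqP; split=> [_ [a ax <-] i iL|z zx].
  by rewrite !iter_shiftE /= ax //; lia.
exists (fun i => if (i < p)%N then x i else z (i - p)%N).
  move=> i ipL; case: ltnP => // pi.
  by rewrite zx ?iter_shiftE /= ?subnK //; lia.
by rewrite iter_shiftE; apply: funext => i /=; rewrite ifN ?addnK //; lia.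
Qed.

Lemma iter_shift_inj_cyl p x L a b :
  cyl x (p + L) a -> cyl x (p + L) b -> sh p a = sh p b -> a = b.
Proof.
move=> ax bx /iter_shift_eqP e; apply: funext => i; case: (ltnP i p) => ip.
  by rewrite ax ?bx //; lia.
by have := e (i - p)%N; rewrite subnK.
Qed.

Lemma iter_shift_eq_cyl a b c (u v u' v' : E2inf) :
  sh a u = sh b v -> sh (a + c) u' = sh (b + c) v' ->
  cyl u (a + c) u' -> cyl v (b + c) v' -> sh a u' = sh b v'.
Proof.
move=> /iter_shift_eqP e /iter_shift_eqP e' uu' vv'; apply/iter_shift_eqP => i.
case: (ltnP i c) => ic; first by rewrite uu' ?vv' ?e //; lia.
have -> : (i + a = i - c + (a + c))%N by lia.
by rewrite e'; congr v'; lia.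
Qed.

(* The word a^m b x, with a = false and b = true. *)
Definition prepend (m : nat) (x : E2inf) : E2inf :=
  fun i => if (i < m)%N then false else if i == m then true else x (i - m.+1)%N.

Lemma prepend_addn m x i : prepend m x (i + m.+1) = x i.
Proof. by rewrite /prepend ifN ?ifN ?addnK //; lia. Qed.

Lemma iter_shift_prepend p m x : sh (p + m.+1) (prepend m x) = sh p x.
Proof.
rewrite iterD; congr (sh p _).
by rewrite iter_shiftE; apply: funext => i; rewrite prepend_addn.
Qed.

Lemma prepend_inj2 m m' x x' : prepend m x = prepend m' x' -> m = m' /\ x = x'.
Proof.
move=> e; have mm' : m = m'.
  have := congr1 (fun f => f m) e; have := congr1 (fun f => f m') e.
  by rewrite /prepend !ltnn !eqxx; case: ltngtP.
subst m'; split=> //; apply: funext => i.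
by rewrite -(prepend_addn m x i) -(prepend_addn m x' i) e.
Qed.

Lemma prepend_cyl m x z L : cyl x L z -> cyl (prepend m x) (m.+1 + L) (prepend m z).
Proof.
move=> zx i iL; rewrite /prepend; case: ltnP => // mi; case: eqP => // /eqP im.
by rewrite zx //; lia.
Qed.

Lemma prepend_continuous m : continuous (prepend m).
Proof.
move=> x U /nbhs_cylP [L LU]; apply/nbhs_cylP; exists L => z zx.
by apply: LU; apply: subset_cyl (prepend_cyl zx); exact: leq_addl.
Qed.

Lemma prepend_image m (U : set E2inf) :
  prepend m @` U = cyl (prepend m point) m.+1 `&` sh m.+1 @^-1` U.
Proof.
have shK x : sh m.+1 (prepend m x) = x by rewrite -[m.+1]add0n iter_shift_prepend.
apply/seteqP; split=> [_ [x Ux <-]|w [wm Uw]].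
  split; last by rewrite /preimage/= -/(sh m.+1 _) shK.
  move=> i im; rewrite /prepend; case: ltnP => // mi.
  by rewrite (_ : i = m) ?eqxx //; lia.
exists (sh m.+1 w) => //; apply: funext => i; rewrite /prepend.
case: ltnP => mi; first by rewrite wm ?/prepend ?mi //; lia.
case: eqP => [->|ne]; first by rewrite wm ?/prepend ?ltnn ?eqxx.
by rewrite iter_shiftE /= subnK //; lia.
Qed.

Lemma prepend_open m U : open U -> open (prepend m @` U).
Proof.
move=> oU; rewrite prepend_image; apply: openI; first exact: cyl_open.
by apply: open_comp oU => x _; exact: iter_shift_continuous.
Qed.

Lemma ge_ext (g h : GE2) :
  ge_x g = ge_x h -> ge_k g = ge_k h -> ge_y g = ge_y h -> g = h.
Proof.
case: g h => x k y P [x' k' y' P'] /= ex ek ey; subst x' k' y'.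
by rewrite (Prop_irrelevance P P').
Qed.

Lemma GE2_composableP (g h : GE2) : composable GE2_ops g h <-> ge_y g = ge_x h.
Proof.
split=> [/(congr1 ge_x) //|e].
by apply: ge_ext; rewrite /= ?e.
Qed.

Lemma ge_mulE (g h : GE2) : ge_y g = ge_x h ->
  [/\ ge_x (ge_mul g h) = ge_x g, ge_k (ge_mul g h) = (ge_k g + ge_k h)%R &
      ge_y (ge_mul g h) = ge_y h].
Proof. by move=> e; rewrite /ge_mul; case: pselect. Qed.

Lemma ge_witness (g : GE2) : exists p q : nat,
  ge_k g = (p%:Z - q%:Z)%R /\ sh p (ge_x g) = sh q (ge_y g).
Proof. by case: g => x k y [p [q [ek e]]]; exists p, q. Qed.

Lemma ge_basic_open i : ge_basic_ok i -> open (ge_basic i).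
Proof.
by move=> ok; exists [set ge_basic i]; [move=> _ ->; exact: finI_from1 | rewrite bigcup_set1].
Qed.

Lemma GE2_continuousP (X : topologicalType) (f : X -> GE2) :
  (forall i, ge_basic_ok i -> open (f @^-1` ge_basic i)) -> continuous f.
Proof.
move=> fb; apply/continuousP => _ [D DI <-]; rewrite preimage_bigcup.
apply: bigcup_open => _ /DI [F Fok <-]; rewrite preimage_bigcap.
by apply: open_bigcap_fset => i iF; apply/fb/set_mem/Fok.
Qed.

Lemma GE2_open_map (Y : topologicalType) (f : GE2 -> Y) :
  injective f -> open (range f) ->
  (forall i, ge_basic_ok i -> open (f @` ge_basic i)) ->
  forall O, open O -> open (f @` O).
Proof.
move=> finj frange fb _ [D DI <-]; rewrite image_bigcup.
apply: bigcup_open => _ /DI [F Fok <-].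
(* The empty intersection has image [range f]. *)
have -> : f @` (\bigcap_(i in [set` F]) ge_basic i) =
    range f `&` \bigcap_(i in [set` F]) f @` ge_basic i.
  apply/seteqP; split=> [_ [g gF <-]|_ [[g _ <-] gF]].
    by split=> [|i iF]; [exists g | exists g => //; exact: gF].
  by exists g => // i /gF [g' g'i /finj <-].
apply: openI frange _; apply: open_bigcap_fset => i iF.
exact/fb/set_mem/Fok.
Qed.

Definition ge_cyl (g : GE2) (p q L : nat) : ge_index :=
  (p, q, cyl (ge_x g) (p + L), cyl (ge_y g) (q + L)).

Lemma ge_cyl_ok g p q L :
  sh p (ge_x g) = sh q (ge_y g) -> ge_basic_ok (ge_cyl g p q L).
Proof.
move=> e; split; try exact: cyl_open.
- by move=> a b; exact: iter_shift_inj_cyl.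
- by move=> a b; exact: iter_shift_inj_cyl.
- by rewrite !iter_shift_cyl e.
Qed.

Lemma ge_cyl_mem g p q L : ge_k g = (p%:Z - q%:Z)%R ->
  sh p (ge_x g) = sh q (ge_y g) -> ge_basic (ge_cyl g p q L) g.
Proof. by split. Qed.

Lemma nbhs_ge_cyl g L :
  nbhs g (ge_x @^-1` cyl (ge_x g) L `&` ge_y @^-1` cyl (ge_y g) L).
Proof.
have [p [q [ek e]]] := ge_witness g.
apply: filterS (open_nbhs_nbhs (conj (ge_basic_open (ge_cyl_ok L e)) (ge_cyl_mem L ek e))).
move=> h [hx hy _ _]; split.
  exact: subset_cyl (leq_addl p L) _ hx.
exact: subset_cyl (leq_addl q L) _ hy.
Qed.

Lemma ge_x_continuous : continuous ge_x.
Proof.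
move=> g U /nbhs_cylP [L LU].
by apply: filterS (nbhs_ge_cyl g L) => h [/LU].
Qed.

Lemma ge_y_continuous : continuous ge_y.
Proof.
move=> g U /nbhs_cylP [L LU].
by apply: filterS (nbhs_ge_cyl g L) => h [_ /LU].
Qed.

Lemma phi_subproof (m n : nat) (g : GE2) :
  E2rel (prepend m (ge_x g)) (ge_k g + m%:Z - n%:Z)%R (prepend n (ge_y g)).
Proof.
have [p [q [-> e]]] := ge_witness g.
exists (p + m.+1)%N, (q + n.+1)%N; split; first by lia.
by rewrite !iter_shift_prepend.
Qed.

Definition phi (m n : nat) (g : GE2) : GE2 := MkGE2 (phi_subproof m n g).

Lemma phi_inj2 m n m' n' g g' :
  phi m n g = phi m' n' g' -> [/\ m = m', n = n' & g = g'].
Proof.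
move=> e; have [mm' xx'] := prepend_inj2 (congr1 ge_x e).
have [nn' yy'] := prepend_inj2 (congr1 ge_y e).
have /= kk' := congr1 ge_k e; subst m' n'.
by split=> //; apply: ge_ext => //; lia.
Qed.

Lemma phi_inj m n : injective (phi m n).
Proof. by move=> g g' /phi_inj2 []. Qed.

Lemma phi_mul m n l (g h : GE2) : ge_y g = ge_x h ->
  ge_mul (phi m n g) (phi n l h) = phi m l (ge_mul g h).
Proof.
move=> gh; have [x1 k1 y1] := ge_mulE gh.
have [|x2 k2 y2] := @ge_mulE (phi m n g) (phi n l h); first by rewrite /= gh.
by apply: ge_ext; rewrite /= ?x1 ?x2 ?y1 ?y2 // k2 k1 /=; lia.
Qed.

Definition phi_index (m n : nat) (i : ge_index) : ge_index :=
  let: (p, q, U, V) := i in (p + m.+1, q + n.+1, prepend m @` U, prepend n @` V)%N.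

Lemma phi_index_ok m n i : ge_basic_ok i -> ge_basic_ok (phi_index m n i).
Proof.
case: i => [[[p q] U] V] [oU oV Uinj Vinj UV]; split; try exact: prepend_open.
- by move=> _ _ [a Ua <-] [b Ub <-]; rewrite !iter_shift_prepend => /Uinj ->.
- by move=> _ _ [a Va <-] [b Vb <-]; rewrite !iter_shift_prepend => /Vinj ->.
have shpre k r : sh (k + r.+1) \o prepend r = sh k by apply: funext => x; exact: iter_shift_prepend.
by rewrite !image_comp !shpre.
Qed.

Lemma phi_basic m n i : phi m n @` ge_basic i = ge_basic (phi_index m n i).
Proof.
case: i => [[[p q] U] V]; apply/seteqP; split.
  move=> _ [g [Ug Vg ek e] <-]; split=> /=.
  - by exists (ge_x g).
  - by exists (ge_y g).
  - by rewrite ek; lia.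
  - by rewrite !iter_shift_prepend.
case=> x' k' y' P' /= [[x Ux ex] [y Vy ey] ek]; subst x' y'.
rewrite !iter_shift_prepend => e.
have Pxy : E2rel x (p%:Z - q%:Z)%R y by exists p, q.
by exists (MkGE2 Pxy) => //; apply: ge_ext => //=; rewrite ek; lia.
Qed.

Lemma phi_range_open m n : open (range (phi m n)).
Proof.
rewrite openE => _ [g _ <-]; have [p [q [ek e]]] := ge_witness g.
have : nbhs (phi m n g) (phi m n @` ge_basic (ge_cyl g p q 0)).
  apply: open_nbhs_nbhs; split; last by exists g => //; exact: ge_cyl_mem.
  by rewrite phi_basic; apply/ge_basic_open/phi_index_ok/ge_cyl_ok.
by apply: filterS => _ [h _ <-]; exists h.
Qed.

Lemma phi_open m n O : open O -> open (phi m n @` O).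
Proof.
apply: GE2_open_map; [exact: phi_inj | exact: phi_range_open |].
by move=> i ok; rewrite phi_basic; apply/ge_basic_open/phi_index_ok.
Qed.

Definition ge_rel (p q : nat) : set GE2 :=
  [set g | ge_k g = (p%:Z - q%:Z)%R /\ sh p (ge_x g) = sh q (ge_y g)].

(* Beyond the first (m + n).+1 letters, the relation with lags (p, q) for
   [phi m n h] is the relation with lags (p + n, q + m) for [h]; a cylinder
   neighbourhood of [g] fixes those first letters. *)
Lemma open_phi_preimage_ge_rel m n p q : open (phi m n @^-1` ge_rel p q).
Proof.
rewrite openE => g [/= ek e].
have shm z : sh (p + (m + n).+1) (prepend m z) = sh (p + n) z.
  by rewrite (_ : p + _ = p + n + m.+1)%N ?iter_shift_prepend //; lia.
have shn z : sh (q + (m + n).+1) (prepend n z) = sh (q + m) z.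
  by rewrite (_ : q + _ = q + m + n.+1)%N ?iter_shift_prepend //; lia.
have e' : sh (p + n) (ge_x g) = sh (q + m) (ge_y g).
  by rewrite -shm -shn ![(_ + (m + n).+1)%N]addnC !iterD e.
have ek' : ge_k g = ((p + n)%:Z - (q + m)%:Z)%R by lia.
apply: filterS (open_nbhs_nbhs (conj (ge_basic_open (ge_cyl_ok 0 e')) (ge_cyl_mem 0 ek' e'))).
move=> h [hx hy hk he]; split=> /=; first by lia.
apply: (iter_shift_eq_cyl (c := (m + n).+1) e); first by rewrite shm shn.
- by apply: subset_cyl (prepend_cyl hx); lia.
- by apply: subset_cyl (prepend_cyl hy); lia.
Qed.

Lemma phi_continuous m n : continuous (phi m n).
Proof.
apply: GE2_continuousP => -[[[p q] U] V] [oU oV _ _ _].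
have -> : phi m n @^-1` ge_basic (p, q, U, V) =
    (prepend m \o ge_x) @^-1` U `&` (prepend n \o ge_y) @^-1` V `&` phi m n @^-1` ge_rel p q.
  by apply/seteqP; split=> g; [case=> Ug Vg ek e | case=> -[Ug Vg] [ek e]].
apply: openI; last exact: open_phi_preimage_ge_rel.
apply: openI; apply: open_comp => // g _.
- by apply: continuous_comp; [exact: ge_x_continuous | exact: prepend_continuous].
- by apply: continuous_comp; [exact: ge_y_continuous | exact: prepend_continuous].
Qed.

Lemma phi_local_homeo m n : local_homeo (phi m n).
Proof.
apply: open_map_local_homeo; [exact: phi_continuous | exact: phi_inj |].
exact: phi_open.
Qed.

Lemma embeds_prodR_GE2 : embeds (prodR_ops GE2_ops) GE2_ops.
Proof.
exists (fun z => phi z.2.1 z.2.2 z.1); split.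
- by move=> [g [m n]] [g' [m' n']] /= /phi_inj2 [-> -> ->].
- move=> [g [m n]] [h [m' n']] [gh _ <- _] /=.
  by split; [apply/GE2_composableP; rewrite /= gh | rewrite phi_mul].
- by apply: (local_homeo_slices nat2_discrete) => -[m n]; exact: phi_local_homeo.
Qed.

Theorem proposition11p14 (H : topologicalType) (o : gpd_ops H) :
  effective o -> ample o -> @second_countable H -> hausdorff_space H ->
  locally_compact_cantor (units o) ->
  (embeds o GE2_ops <-> embeds (prodR_ops o) GE2_ops).
Proof.
move=> _ _ _ _ _; split=> [emb | embR].
- exact: embeds_trans (embeds_prodR emb) embeds_prodR_GE2.
- exact: embeds_trans (embeds_prodR_corner o) embR.
Qed.
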